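(* For every integer $q\ge 5$ there exists an $\mathcal{SOS}_q(2)$ of period $\frac{q(q-4)}{4}$ if $q\equiv 0\pmod 4$, $\frac{(q+1)(q-1)}{4}$ if $q\equiv 1\pmod 4$, $\frac{q(q-2)}{4}$ if $q\equiv 2\pmod 4$, and $\frac{(q+1)(q-3)}{4}$ if $q\equiv 3\pmod 4$.
   Context: For a periodic sequence $S=(s_i)$ over $\mathbb{Z}_q$ write $\mathbf{s}_n(i)=(s_i,\ldots,s_{i+n-1})$; $\mathbf{u}^R$ denotes the reverse of a tuple and $-\mathbf{u}$ its termwise negative. An $\mathcal{SOS}_q(n)$ is a periodic sequence of period $m$ over $\mathbb{Z}_q$ such that $\mathbf{s}_n(i)=\mathbf{s}_n(j)$ implies $i\equiv j\pmod m$, and $\mathbf{s}_n(i)\neq\mathbf{s}_n(j)^R$ and $\mathbf{s}_n(i)\neq-\mathbf{s}_n(j)^R$ for all $i,j$. *)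

From mathcomp Require Import all_boot all_algebra.
Set Implicit Arguments. Unset Strict Implicit. Unset Printing Implicit Defensive.
Import GRing.Theory.
Local Open Scope ring_scope.

Definition periodic (q : nat) (s : nat -> 'Z_q) (m : nat) : Prop :=
  (0 < m)%N /\ forall i, s (i + m)%N = s i.

Definition window (q : nat) (s : nat -> 'Z_q) (n i : nat) : seq 'Z_q :=
  [seq s (i + k)%N | k <- iota 0 n].

Definition negw (q : nat) (u : seq 'Z_q) : seq 'Z_q := [seq - x | x <- u].

Definition is_SOS (q n : nat) (s : nat -> 'Z_q) (m : nat) : Prop :=
  periodic s m /\
  (forall i j, window s n i = window s n j -> i = j %[mod m]) /\
  (forall i j, window s n i <> rev (window s n j)) /\
  (forall i j, window s n i <> negw (rev (window s n j))).

Definition cor_period (q : nat) : nat :=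
  match (q %% 4)%N with
  | 0 => (q * (q - 4)) %/ 4
  | 1 => ((q + 1) * (q - 1)) %/ 4
  | 2 => (q * (q - 2)) %/ 4
  | _ => ((q + 1) * (q - 3)) %/ 4
  end.

(* Let K = (q-1)/4, so that 4K < q. The sequence takes values +-a with
   0 <= a <= 2K and satisfies s_(i+L) = -s_i, so the window (s_i, s_(i+1)) is
   determined by the absolute pair (|s_i|, |s_(i+1)|) together with the signs.
   An Eulerian circuit of the circulant tournament on Z_(2K+1) with steps
   1, ..., K supplies L = (2K+1)K absolute pairs, pairwise distinct and never
   the reverse of one another, because two steps in [1, K] cannot add up to
   0 mod 2K+1; as a pair never has two zero entries, the two halves of the
   period give different windows. For q = 0, 3 (mod 4) the circuit is preceded
   by the detour 1, 3, ..., 2K-1, 1, whose K pairs repeat tour pairs but carry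
   a sign change where the tour has none, which adds K windows. The cases
   q = 7, 8, 11, 12, where K < 3, are settled by explicit sequences. *)

From mathcomp Require Import all_boot all_algebra zify.
Set Implicit Arguments. Unset Strict Implicit. Unset Printing Implicit Defensive.

Definition signed q (b : bool) (a : nat) : 'Z_q := if b then (- inZp a)%R else inZp a.

Lemma val_signed q b a : 1 < q -> a < q ->
  val (signed q b a) = if b && (0 < a) then q - a else a.
Proof.
move=> q_gt1 a_lt; case: b; rewrite /= (Zp_cast q_gt1) (modn_small a_lt) //.
by case: posnP => [->|a_gt0]; rewrite ?subn0 ?modnn // modn_small //; lia.
Qed.

Lemma signed_inj q b b' a a' : 1 < q -> 2 * a < q -> 2 * a' < q ->
  signed q b a = signed q b' a' -> a = a' /\ (a != 0 -> b = b').
Proof.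
move=> q_gt1 a_small a'_small /(congr1 val); rewrite !val_signed; try lia.
by case: b; case: b'; case: (posnP a) => [->|?]; case: (posnP a') => [->|?] //=; lia.
Qed.

Lemma oppr_signed q b a : (- signed q b a)%R = signed q (~~ b) a.
Proof. by case: b; rewrite /= ?GRing.opprK. Qed.

Lemma modSn_mod i L : (i %% L).+1 %% L = i.+1 %% L.
Proof. by rewrite -addn1 modnDml addn1. Qed.

Lemma dvdn_succ L i : 0 < L -> (L %| i.+1) = ((i %% L).+1 == L).
Proof.
move=> L_gt0; rewrite /dvdn -modSn_mod.
have : (i %% L).+1 <= L by rewrite ltn_pmod.
rewrite leq_eqVlt => /predU1P[->|lt]; first by rewrite modnn !eqxx.
by rewrite modn_small // (ltn_eqF lt).
Qed.

Lemma modn_double L i : i %% (2 * L) = odd (i %/ L) * L + i %% L.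
Proof.
by rewrite {1}(divn_eq (i %% (2 * L)) L) -modn_divl modn2 modn_dvdm ?dvdn_mull.
Qed.

Definition antiperiodic_sign L (e : nat -> bool) i := odd (i %/ L) (+) e (i %% L).

Definition antiperiodic q L (x : nat -> nat) (e : nat -> bool) i : 'Z_q :=
  signed q (antiperiodic_sign L e i) (x (i %% L)).

(* The term [p.+1 == L] accounts for the sign reversal between the two halves
   of the period. *)
Definition sign_flip L (e : nat -> bool) p := e p (+) e (p.+1 %% L) (+) (p.+1 == L).

Lemma antiperiodic_sign_succ L e i : 0 < L ->
  antiperiodic_sign L e i.+1 = antiperiodic_sign L e i (+) sign_flip L e (i %% L).
Proof.
move=> L_gt0; rewrite /antiperiodic_sign /sign_flip divnS // oddD modSn_mod dvdn_succ //.
rewrite oddb; set o := odd _; set b := e (i %% L); set c := e _; set d := (_ == L).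
by case: o b c d => [] [] [] [].
Qed.

Section Antiperiodic.

Variables (q L : nat) (x : nat -> nat) (e : nat -> bool).
Hypotheses (q_gt1 : 1 < q) (L_gt0 : 0 < L).
Hypothesis x_small : forall p, p < L -> 2 * x p < q.
Hypothesis no_reversed_edge : forall p p', p < L -> p' < L ->
  x p = x (p'.+1 %% L) -> x (p.+1 %% L) = x p' -> False.
Hypothesis edge_inj : forall p p', p < L -> p' < L ->
  x p = x p' -> x (p.+1 %% L) = x (p'.+1 %% L) ->
  (x p != 0 -> x (p.+1 %% L) != 0 -> sign_flip L e p = sign_flip L e p') -> p = p'.

Local Notation s := (antiperiodic q L x e).
Local Notation sign := (antiperiodic_sign L e).

Lemma window2 i : window s 2 i = [:: s i; s i.+1].
Proof. by rewrite /window /= addn0 addn1. Qed.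

Lemma periodic_antiperiodic : periodic s (2 * L).
Proof.
split=> [|i]; first by rewrite muln_gt0.
by rewrite /antiperiodic /antiperiodic_sign addnC modnMDl divnMDl // oddD.
Qed.

Lemma antiperiodic_eq i j : s i = s j ->
  x (i %% L) = x (j %% L) /\ (x (i %% L) != 0 -> sign i = sign j).
Proof. by apply: signed_inj; rewrite ?x_small ?ltn_pmod. Qed.

Lemma antiperiodic_abs_eq (b : bool) i j : s i = (if b then - s j else s j)%R ->
  x (i %% L) = x (j %% L).
Proof.
case: b; rewrite /antiperiodic ?oppr_signed => /signed_inj[] //;
  by rewrite ?x_small ?ltn_pmod.
Qed.

Lemma antiperiodic_window_not_reversed (b : bool) i j :
  window s 2 i <> [seq (if b then - z else z)%R | z <- rev (window s 2 j)].
Proof.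
rewrite !window2 /= => -[/antiperiodic_abs_eq Ei /antiperiodic_abs_eq Ei1].
apply: (no_reversed_edge (ltn_pmod i L_gt0) (ltn_pmod j L_gt0)).
  by rewrite Ei modSn_mod.
by rewrite modSn_mod Ei1.
Qed.

Lemma antiperiodic_window_inj i j : window s 2 i = window s 2 j -> i = j %[mod 2 * L].
Proof.
rewrite !window2 => -[/antiperiodic_eq[Ex Esign] /antiperiodic_eq[Ex1 Esign1]].
rewrite !antiperiodic_sign_succ // -(modSn_mod i) -(modSn_mod j) in Esign1 Ex1.
have p_lt := ltn_pmod i L_gt0; have p'_lt := ltn_pmod j L_gt0.
have Ep : i %% L = j %% L.
  apply: edge_inj => // nz nz1.
  by move: (Esign1 nz1); rewrite (Esign nz) => /addbI.
have Es : sign i = sign j.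
  have [x0|] := eqVneq (x (i %% L)) 0; last exact: Esign.
  have nz1 : x ((i %% L).+1 %% L) != 0.
    apply/eqP => x10; apply: (no_reversed_edge p_lt p_lt); by rewrite x0 x10.
  by move: (Esign1 nz1); rewrite Ep => /addIb.
rewrite !modn_double Ep; congr (_ * _ + _).
by move: Es; rewrite /antiperiodic_sign Ep => /addIb ->.
Qed.

Theorem antiperiodic_SOS : is_SOS 2 s (2 * L).
Proof.
split; first exact: periodic_antiperiodic.
split; first exact: antiperiodic_window_inj.
split=> i j.
  by have := @antiperiodic_window_not_reversed false i j; rewrite map_id.
exact: (@antiperiodic_window_not_reversed true).
Qed.

End Antiperiodic.

Section CirculantWalk.

Variables (N L : nat) (x d : nat -> nat).
Hypothesis x_succ : forall p, p < L -> x (p.+1 %% L) = (x p + d p) %% N.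
Hypotheses (d_gt0 : forall p, 0 < d p) (d_small : forall p, 2 * d p < N).

Lemma walk_no_reversed_edge p p' : p < L -> p' < L ->
  x p = x (p'.+1 %% L) -> x (p.+1 %% L) = x p' -> False.
Proof.
move=> p_lt p'_lt; rewrite !x_succ // => Ep Ep'.
have : x p + 0 = x p + (d p + d p') %[mod N].
  by rewrite addn0 {1}Ep -Ep' modn_mod modnDml addnA.
have := d_small p; have := d_small p'; have := d_gt0 p.
by move=> ? ? ? /eqP; rewrite eqn_modDl mod0n modn_small; lia.
Qed.

Lemma walk_step_eq p p' : p < L -> p' < L ->
  x p = x p' -> x (p.+1 %% L) = x (p'.+1 %% L) -> d p = d p'.
Proof.
move=> p_lt p'_lt Ep; rewrite !x_succ // Ep => /eqP; rewrite eqn_modDl.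
have := d_small p; have := d_small p'.
by move=> ? ?; rewrite !modn_small; [move/eqP | lia | lia].
Qed.

End CirculantWalk.

Lemma triangular_succ c : 'C(c.+2, 2) = 'C(c.+1, 2) + c.+1.
Proof. by rewrite binS bin1. Qed.

Lemma coprime_triangular K : coprime (2 * K + 1) 'C(K.+1, 2).
Proof.
have coK : coprime (2 * K + 1) K.
  by have := coprimeSn (2 * K); rewrite addn1 coprimeMr => /andP[].
have coK1 : coprime (2 * K + 1) K.+1.
  have := coprimenS (2 * K + 1).
  have -> : (2 * K + 1).+1 = 2 * K.+1 by lia.
  by rewrite coprimeMr => /andP[].
have : coprime (2 * K + 1) (K.+1 * 'C(K, 1)) by rewrite bin1 coprimeMr coK coK1.
by rewrite mul_bin_diag coprimeMr => /andP[].
Qed.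

Lemma mod_mulr_inj d k m n : coprime d k -> m < d -> n < d ->
  m * k = n * k %[mod d] -> m = n.
Proof.
move=> co m_lt n_lt.
wlog le_nm : m n m_lt n_lt / n <= m => [wlog_le Emn|].
  by case: (leqP n m) => [|/ltnW] le; [exact: wlog_le | exact/esym/wlog_le].
move/eqP; rewrite eqn_mod_dvd ?leq_mul2r ?le_nm ?orbT // -mulnBl Gauss_dvdl //.
by case: (posnP (m - n)) => [|pos /(dvdn_leq pos)]; lia.
Qed.

(* Block r of the circuit takes the steps 1, ..., K in turn, starting from
   1 + r * 'C(K+1, 2); as 'C(K+1, 2) is coprime to 2K+1 the 2K+1 blocks start
   at distinct vertices, so every edge (v, v + d) is traversed exactly once. *)
Definition tour K e :=
  (1 + e %/ K * 'C(K.+1, 2) + 'C((e %% K).+1, 2)) %% (2 * K + 1).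

Lemma tour_succ K e : 0 < K ->
  tour K e.+1 = (tour K e + (e %% K).+1) %% (2 * K + 1).
Proof.
move=> K_gt0; rewrite /tour divnS // modnS dvdn_succ // modnDml.
case: eqP => [wrap|_]; congr (_ %% _); last by rewrite triangular_succ addnA.
have C_wrap : 'C(K.+1, 2) = 'C((e %% K).+1, 2) + (e %% K).+1.
  by rewrite -triangular_succ wrap.
by rewrite mulSn /= addn0; lia.
Qed.

Lemma tour0 K : 0 < K -> tour K 0 = 1.
Proof.
by move=> K_gt0; rewrite /tour div0n mod0n mul0n bin_small // modn_small //; lia.
Qed.

Lemma tour_closed K : 0 < K -> tour K ((2 * K + 1) * K) = 1.
Proof.
move=> K_gt0; rewrite /tour mulnK // modnMl (bin_small (ltnSn 1)) addn0.
by rewrite addnC mulnC modnMDl modn_small //; lia.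
Qed.

Lemma tour_inj K e e' : 0 < K -> e < (2 * K + 1) * K -> e' < (2 * K + 1) * K ->
  tour K e = tour K e' -> e %% K = e' %% K -> e = e'.
Proof.
move=> K_gt0 e_lt e'_lt Etour Ec.
rewrite (divn_eq e K) (divn_eq e' K) Ec; congr (_ * _ + _).
apply: (mod_mulr_inj (coprime_triangular K)); rewrite ?ltn_divLR //.
by apply/eqP; move: Etour; rewrite /tour Ec => /eqP; rewrite eqn_modDr eqn_modDl.
Qed.

Definition detour_len K (c : bool) := if c then K else 0.

Definition walk_len K c := (2 * K + 1) * K + detour_len K c.

Definition walk K c p :=
  if p < detour_len K c then 2 * p + 1 else tour K (p - detour_len K c).

Definition walk_step K c p :=
  if p < detour_len K c then (if p.+1 < detour_len K c then 2 else 3)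
  else ((p - detour_len K c) %% K).+1.

(* The sign changes along every detour edge and along no tour edge except
   possibly the last one, whose step K is neither 2 nor 3 once K is even and
   at least 3. *)
Definition walk_sign K c p := odd (minn p (detour_len K c)).

Section Walk.

Variables (K : nat) (c : bool).
Hypotheses (K_gt0 : 0 < K) (K_ge3 : c -> 3 <= K).

Local Notation D := (detour_len K c).
Local Notation L := (walk_len K c).

Lemma detour_lenE : D = 0 \/ D = K /\ 3 <= K.
Proof. by rewrite /detour_len; case: c K_ge3 => [/(_ isT)|_]; [right | left]. Qed.

Lemma detour_len_le : D <= K.
Proof. by rewrite /detour_len; case: c. Qed.

Lemma walk_len_gt : K < L.
Proof. by rewrite /walk_len; case: detour_lenE; nia. Qed.

Lemma walk_on_detour p : p < D -> walk K c p = 2 * p + 1.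
Proof. by rewrite /walk => ->. Qed.

Lemma walk_off_detour p : D <= p -> walk K c p = tour K (p - D).
Proof. by rewrite /walk ltnNge => ->. Qed.

Lemma walk_step_off_detour p : D <= p -> walk_step K c p = ((p - D) %% K).+1.
Proof. by rewrite /walk_step ltnNge => ->. Qed.

Lemma walk_lt p : walk K c p < 2 * K + 1.
Proof.
have [p_lt|p_ge] := ltnP p D; first by rewrite walk_on_detour //; case: detour_lenE; lia.
by rewrite walk_off_detour // /tour ltn_pmod // addn1.
Qed.

Lemma walk_step_gt0 p : 0 < walk_step K c p.
Proof. by rewrite /walk_step; case: ifP => //; case: ifP. Qed.

Lemma walk_step_small p : 2 * walk_step K c p < 2 * K + 1.
Proof.
have [p_lt|p_ge] := ltnP p D.
  by rewrite /walk_step p_lt; case: detour_lenE; case: ifP; lia.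
by rewrite walk_step_off_detour //; have := ltn_pmod (p - D) K_gt0; lia.
Qed.

Lemma walk_succ p : p < L ->
  walk K c (p.+1 %% L) = (walk K c p + walk_step K c p) %% (2 * K + 1).
Proof.
move=> p_lt; have L_gt := walk_len_gt; have D_le := detour_len_le.
have [p_ltD|p_geD] := ltnP p D.
  rewrite modn_small; last lia.
  rewrite (walk_on_detour p_ltD) /walk_step p_ltD.
  have [p1_ltD|p1_geD] := ltnP p.+1 D.
    by rewrite (walk_on_detour p1_ltD) modn_small //; case: detour_lenE; lia.
  rewrite (walk_off_detour p1_geD) (_ : p.+1 - D = 0); last lia.
  rewrite tour0 // (_ : 2 * p + 1 + 3 = 1 * (2 * K + 1) + 1); last first.
    by case: detour_lenE; lia.
  by rewrite modnMDl modn_small //; lia.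
rewrite (walk_off_detour p_geD) (walk_step_off_detour p_geD) -tour_succ //.
have [p1_lt|p1_eq] : p.+1 < L \/ p.+1 = L by lia.
  by rewrite modn_small // walk_off_detour ?subSn //; lia.
have -> : (p - D).+1 = (2 * K + 1) * K by move: p1_eq; rewrite /walk_len; lia.
rewrite p1_eq modnn tour_closed //.
by rewrite /walk; case: detour_lenE => [->|[-> _]]; rewrite ?tour0 ?K_gt0.
Qed.

Lemma walk_flip p : p < L ->
  sign_flip L (walk_sign K c) p = (p < D) || (p.+1 == L) && ~~ odd D.
Proof.
move=> p_lt; have L_gt := walk_len_gt; have D_le := detour_len_le.
rewrite /sign_flip /walk_sign.
have [p1_lt|p1_eq] : p.+1 < L \/ p.+1 = L by lia.
  rewrite modn_small // (ltn_eqF p1_lt) addbF orbF.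
  have [p_ltD|p_geD] := ltnP p D.
    by rewrite !(minn_idPl _) ?oddS ?addbN ?addbb // ltnW.
  by rewrite !(minn_idPr _) ?addbb // ltnW.
rewrite p1_eq modnn eqxx min0n addbF addbT (minn_idPr _) //; last lia.
by rewrite leqNgt (leq_ltn_trans D_le L_gt).
Qed.

Lemma walk_step_last : walk_step K c L.-1 = K.
Proof.
rewrite walk_step_off_detour /walk_len; last by case: detour_lenE; nia.
have -> : ((2 * K + 1) * K + D).-1 - D = 2 * K * K + K.-1 by nia.
by rewrite modnMDl modn_small ?prednK //; lia.
Qed.

Lemma detour_edge_nonzero p : p < D ->
  walk K c p != 0 /\ walk K c (p.+1 %% L) != 0.
Proof.
move=> p_ltD; have L_gt := walk_len_gt; have D_le := detour_len_le.
rewrite (walk_on_detour p_ltD) modn_small; last lia.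
split; first by rewrite addn1.
have [p1_ltD|p1_geD] := ltnP p.+1 D; first by rewrite walk_on_detour // addn1.
by rewrite walk_off_detour // (_ : p.+1 - D = 0) ?tour0 //; lia.
Qed.

Lemma detour_edge_fresh p p' : p < D -> D <= p' -> p' < L ->
  walk_step K c p = walk_step K c p' ->
  sign_flip L (walk_sign K c) p != sign_flip L (walk_sign K c) p'.
Proof.
move=> p_ltD p'_geD p'_lt Ed; have L_gt := walk_len_gt.
rewrite !walk_flip //; last by case: detour_lenE; lia.
rewrite p_ltD ltnNge p'_geD /=; apply/negP => /andP[/eqP p'_last D_even].
have step_le3 : walk_step K c p <= 3 by rewrite /walk_step p_ltD; case: ifP.
move: Ed D_even; rewrite (_ : p' = L.-1) ?walk_step_last; last lia.
case: detour_lenE => [D0|[-> K_ge]] step_K; first lia.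
by have -> : K = 3 by lia.
Qed.

Lemma walk_edge_inj p p' : p < L -> p' < L ->
  walk K c p = walk K c p' -> walk K c (p.+1 %% L) = walk K c (p'.+1 %% L) ->
  (walk K c p != 0 -> walk K c (p.+1 %% L) != 0 ->
     sign_flip L (walk_sign K c) p = sign_flip L (walk_sign K c) p') ->
  p = p'.
Proof.
move=> p_lt p'_lt Ew Ew1 Eflip.
have Ed := walk_step_eq walk_succ walk_step_small p_lt p'_lt Ew Ew1.
have [p_ltD|p_geD] := ltnP p D; have [p'_ltD|p'_geD] := ltnP p' D.
- by move: Ew; rewrite !walk_on_detour //; lia.
- have [nz nz1] := detour_edge_nonzero p_ltD.
  by have := detour_edge_fresh p_ltD p'_geD p'_lt Ed; rewrite Eflip ?eqxx.
- have [nz nz1] := detour_edge_nonzero p'_ltD; rewrite Ew Ew1 in Eflip.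
  by have := detour_edge_fresh p'_ltD p_geD p_lt (esym Ed); rewrite Eflip ?eqxx.
- move: Ew Ed; rewrite !walk_off_detour // !walk_step_off_detour // => Ew [Ed].
  have := tour_inj K_gt0 _ _ Ew Ed; rewrite /walk_len in p_lt p'_lt; lia.
Qed.

End Walk.

Theorem walk_SOS q K (c : bool) : 0 < K -> (c -> 3 <= K) -> 4 * K < q ->
  is_SOS 2 (antiperiodic q (walk_len K c) (walk K c) (walk_sign K c)) (2 * walk_len K c).
Proof.
move=> K_gt0 K_ge3 K_lt; have L_gt := walk_len_gt K_gt0 K_ge3.
apply: antiperiodic_SOS => [||p _||]; try lia.
- by have := walk_lt K_gt0 K_ge3 p; lia.
- exact: (walk_no_reversed_edge (walk_succ K_gt0 K_ge3) (@walk_step_gt0 K c)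
    (walk_step_small K_gt0 K_ge3)).
- exact: walk_edge_inj.
Qed.

Lemma antiperiodic_SOS_check q L (x : nat -> nat) (e : nat -> bool) : 1 < q -> 0 < L ->
  all (fun p => 2 * x p < q) (iota 0 L) ->
  allrel (fun p p' => ~~ [&& x p == x (p'.+1 %% L) & x (p.+1 %% L) == x p'])
    (iota 0 L) (iota 0 L) ->
  allrel (fun p p' =>
      [&& x p == x p', x (p.+1 %% L) == x (p'.+1 %% L) &
          (x p != 0) ==> (x (p.+1 %% L) != 0) ==> (sign_flip L e p == sign_flip L e p')]
      ==> (p == p'))
    (iota 0 L) (iota 0 L) ->
  is_SOS 2 (antiperiodic q L x e) (2 * L).
Proof.
move=> q_gt1 L_gt0 /allP x_small /allrelP no_rev /allrelP inj.
have mem p : p < L -> p \in iota 0 L by rewrite mem_iota.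
apply: antiperiodic_SOS => // [p /mem/x_small //|p p' p_lt p'_lt Ex Ex1|].
  by have := no_rev _ _ (mem _ p_lt) (mem _ p'_lt); rewrite Ex Ex1 !eqxx.
move=> p p' p_lt p'_lt Ex Ex1 Eflip; apply/eqP.
have := inj _ _ (mem _ p_lt) (mem _ p'_lt); rewrite Ex Ex1 !eqxx => /implyP; apply.
by apply/implyP => nz; apply/implyP => nz1; rewrite Eflip ?Ex ?Ex1.
Qed.

Definition small_walk p := nth 0 [:: 0; 1; 2; 0; 3; 1; 2; 3; 1; 4; 2; 5] p.

Definition small_sign p := p \in [:: 6; 8].

Lemma cor_period_walk q : 4 < q ->
  cor_period q = 2 * walk_len (q.-1 %/ 4) ((q %% 4 == 0) || (q %% 4 == 3)).
Proof.
move=> q_gt4; rewrite /cor_period /walk_len /detour_len.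
set K := q.-1 %/ 4.
have q_eq : q = K * 4 + (q.-1 %% 4).+1 by rewrite addnS -divn_eq; lia.
move: (q.-1 %% 4) (ltn_pmod q.-1 (isT : 0 < 4)) q_eq => [|[|[|[|r]]]] // _ ->;
  rewrite modnMDl /=; nia.
Qed.

Theorem corollary3p10 (q : nat) : (5 <= q)%N ->
  exists s : nat -> 'Z_q, is_SOS 2 s (cor_period q).
Proof.
move=> q_ge5.
have [|large] := boolP (q \in [:: 7; 8; 11; 12]).
  rewrite !inE => /or4P[] /eqP->.
  - by exists (antiperiodic 7 4 id xpred0); apply: antiperiodic_SOS_check.
  - by exists (antiperiodic 8 4 id xpred0); apply: antiperiodic_SOS_check.
  - by exists (antiperiodic 11 12 small_walk small_sign); apply: antiperiodic_SOS_check.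
  - by exists (antiperiodic 12 12 small_walk small_sign); apply: antiperiodic_SOS_check.
set K := q.-1 %/ 4; set c := (q %% 4 == 0) || (q %% 4 == 3).
exists (antiperiodic q (walk_len K c) (walk K c) (walk_sign K c)).
rewrite cor_period_walk; last lia.
apply: walk_SOS; rewrite /K /c; move: large; rewrite !inE; lia.
Qed.
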